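(* Connes' cyclic category $\Lambda$ and its wide subcategory of cyclic injections are quasi-Gröbner.
   Context: Quasi-Gröbner categories. Let $\mathcal{C}$ be a small category and $c$ an object. An admissible order on the morphisms out of $c$ is a choice, for every object $c'$, of a well-order on $\mathrm{Hom}(c,c')$ such that $f\prec f'$ implies $g\circ f\prec g\circ f'$ for all $g$. On morphisms out of $c$ put the preorder $f\le g$ iff $g=h\circ f$ for some $h$; $|c/\mathcal{C}|$ is the associated poset. A poset is Noetherian if every sequence $x_1,x_2,\dots$ has $i<j$ with $x_i\le x_j$. $\mathcal{C}$ is Gröbner if for every object $c$: (G1) morphisms out of $c$ admit an admissible order, and (G2) $|c/\mathcal{C}|$ is Noetherian. A functor $\Phi:\mathcal{C}\to\mathcal{D}$ has property (F) if for every object $d$ of $\mathcal{D}$ there are finitely many objects $c_i$ of $\mathcal{C}$ and morphisms $f_i:d\to\Phi(c_i)$ such that every $f:d\to\Phi(c)$ factors as $\Phi(g)\circ f_i$ for some $i$ and $g:c_i\to c$. $\mathcal{D}$ is quasi-Gröbner if there is a Gröbner $\mathcal{C}$ and an essentially surjective functor $\mathcal{C}\to\mathcal{D}$ with property (F). The subcategory of cyclic injections of $\Lambda$ is the wide subcategory of monomorphisms (morphisms whose underlying map of cyclically ordered sets is injective). *)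

From Stdlib Require Import ZArith Lia List.
Set Implicit Arguments.

Record PreCat := {
  Obj : Type;
  Hom : Obj -> Obj -> Type;
  idm : forall a : Obj, Hom a a;
  comp : forall a b c : Obj, Hom b c -> Hom a b -> Hom a c }.
Arguments idm {p} a.
Arguments comp {p a b c} _ _.

Definition is_category (C : PreCat) : Prop :=
  (forall a b c d (f : Hom C a b) (g : Hom C b c) (h : Hom C c d),
      comp h (comp g f) = comp (comp h g) f) /\
  (forall a b (f : Hom C a b), comp (idm b) f = f) /\
  (forall a b (f : Hom C a b), comp f (idm a) = f).

Record Functor (C D : PreCat) := {
  Fobj : Obj C -> Obj D;
  Fmor : forall a b : Obj C, Hom C a b -> Hom D (Fobj a) (Fobj b);
  Fmor_comp : forall a b c (f : Hom C a b) (g : Hom C b c),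
      Fmor a c (comp g f) = comp (Fmor b c g) (Fmor a b f);
  Fmor_id : forall a, Fmor a a (idm a) = idm (Fobj a) }.
Arguments Fobj {C D} _ _.
Arguments Fmor {C D} _ {a b} _.

Definition strict_well_order (T : Type) (lt : T -> T -> Prop) : Prop :=
  (forall x, ~ lt x x) /\
  (forall x y z, lt x y -> lt y z -> lt x z) /\
  (forall x y, lt x y \/ x = y \/ lt y x) /\
  well_founded lt.

Definition admissible_order (C : PreCat) (c : Obj C)
  (lt : forall c' : Obj C, Hom C c c' -> Hom C c c' -> Prop) : Prop :=
  (forall c', strict_well_order (lt c')) /\
  (forall c' c'' (g : Hom C c' c'') (f f' : Hom C c c'),
      lt c' f f' -> lt c'' (comp g f) (comp g f')).

Definition under (C : PreCat) (c : Obj C) := {c' : Obj C & Hom C c c'}.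

Definition under_le {C : PreCat} {c : Obj C} (u v : under C c) : Prop :=
  exists h : Hom C (projT1 u) (projT1 v), projT2 v = comp h (projT2 u).

Definition G1 {C : PreCat} (c : Obj C) : Prop :=
  exists lt, @admissible_order C c lt.

Definition G2 {C : PreCat} (c : Obj C) : Prop :=
  forall s : nat -> under C c, exists i j : nat, (i < j)%nat /\ under_le (s i) (s j).

Definition Groebner (C : PreCat) : Prop := forall c : Obj C, G1 c /\ G2 c.

Definition isomorphic {D : PreCat} (a b : Obj D) : Prop :=
  exists (f : Hom D a b) (g : Hom D b a), comp g f = idm a /\ comp f g = idm b.

Definition ess_surj {C D : PreCat} (F : Functor C D) : Prop :=
  forall d : Obj D, exists c : Obj C, isomorphic d (Fobj F c).

Definition propF {C D : PreCat} (F : Functor C D) : Prop :=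
  forall d : Obj D,
    exists L : list {c : Obj C & Hom D d (Fobj F c)},
      forall (c : Obj C) (f : Hom D d (Fobj F c)),
        exists p, In p L /\
          exists g : Hom C (projT1 p) c, f = comp (Fmor F g) (projT2 p).

Definition quasiGroebner (D : PreCat) : Prop :=
  exists C : PreCat, is_category C /\ Groebner C /\
    exists F : Functor C D, ess_surj F /\ propF F.

Definition WideSub (C : PreCat) (P : forall a b, Hom C a b -> Prop)
  (Pid : forall a, P a a (idm a))
  (Pcomp : forall a b c (f : Hom C a b) (g : Hom C b c), P b c g -> P a b f -> P a c (comp g f))
  : PreCat :=
  {| Obj := Obj C;
     Hom := fun a b => {f : Hom C a b | P a b f};
     idm := fun a => exist _ (idm a) (Pid a);
     comp := fun a b c g f =>
       exist _ (comp (proj1_sig g) (proj1_sig f))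
             (Pcomp _ _ _ _ _ (proj2_sig g) (proj2_sig f)) |}.

(* ---------- Connes' cyclic category Lambda ----------
   Object n : nat stands for [n], the cyclically ordered set Z/(n+1).
   A morphism [m] -> [n] is a class of nondecreasing maps f : Z -> Z with
   f(x + m + 1) = f(x) + n + 1, modulo f ~ f + k(n+1); we use the unique
   representative with 0 <= f 0 <= n. *)
Open Scope Z_scope.

Definition cyc_map (m n : nat) (f : Z -> Z) : Prop :=
  (forall x y, x <= y -> f x <= f y) /\
  (forall x, f (x + Z.of_nat (S m)) = f x + Z.of_nat (S n)) /\
  0 <= f 0 <= Z.of_nat n.

Definition LHom (m n : nat) := {f : Z -> Z | cyc_map m n f}.

Lemma cyc_map_id (n : nat) : cyc_map n n (fun x => x).
Proof. repeat split; intros; lia. Qed.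

Definition Lnorm (p : nat) (g f : Z -> Z) : Z -> Z :=
  fun x => g (f x) - Z.of_nat (S p) * (g (f 0) / Z.of_nat (S p)).

Lemma cyc_map_comp (m n p : nat) (g f : Z -> Z) :
  cyc_map n p g -> cyc_map m n f -> cyc_map m p (Lnorm p g f).
Proof.
  intros [gm [gp g0]] [fm [fp f0]]. unfold Lnorm.
  assert (Hp : 0 < Z.of_nat (S p)) by lia.
  repeat split.
  - intros x y Hxy. specialize (gm _ _ (fm _ _ Hxy)). lia.
  - intros x. rewrite fp, gp. lia.
  - pose proof (Z.mod_pos_bound (g (f 0)) _ Hp).
    rewrite (Z.div_mod (g (f 0)) (Z.of_nat (S p))) at 1 by lia. lia.
  - pose proof (Z.mod_pos_bound (g (f 0)) _ Hp).
    rewrite (Z.div_mod (g (f 0)) (Z.of_nat (S p))) at 1 by lia. lia.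
Qed.

Definition Lambda : PreCat :=
  {| Obj := nat;
     Hom := LHom;
     idm := fun n => exist _ (fun x => x) (cyc_map_id n);
     comp := fun m n p g f =>
       exist _ (Lnorm p (proj1_sig g) (proj1_sig f))
             (cyc_map_comp (proj2_sig g) (proj2_sig f)) |}.

(* Cyclic injection: the induced map Z/(m+1) -> Z/(n+1) is injective. *)
Definition cyc_inj {m n : nat} (f : Hom Lambda m n) : Prop :=
  forall x y : Z, (Z.of_nat (S n) | proj1_sig f x - proj1_sig f y) ->
                  (Z.of_nat (S m) | x - y).

Lemma cyc_inj_id (n : nat) : cyc_inj (idm (p := Lambda) n).
Proof. intros x y H; exact H. Qed.

Lemma cyc_inj_comp (m n p : nat) (f : Hom Lambda m n) (g : Hom Lambda n p) :
  cyc_inj g -> cyc_inj f -> cyc_inj (comp g f).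
Proof.
  intros Hg Hf x y H. apply Hf, Hg. simpl in H. unfold Lnorm in H.
  replace (proj1_sig g (proj1_sig f x) - proj1_sig g (proj1_sig f y)) with
    (proj1_sig g (proj1_sig f x) - Z.of_nat (S p) * (proj1_sig g (proj1_sig f 0) / Z.of_nat (S p)) -
     (proj1_sig g (proj1_sig f y) - Z.of_nat (S p) * (proj1_sig g (proj1_sig f 0) / Z.of_nat (S p))))
    by ring.
  exact H.
Qed.

Definition LambdaInj : PreCat := @WideSub Lambda (@cyc_inj) cyc_inj_id cyc_inj_comp.
Close Scope Z_scope.

From Stdlib Require Import ZArith Lia List Wf_nat Classical ClassicalEpsilon ProofIrrelevance
  FunctionalExtensionality.

(* Write OI for the category of order-preserving injections [k] -> [n] fixing 0 (equivalently,
   ordered injections from {1..k} to {1..n}).  OI is Gröbner: its hom-sets are finite and are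
   well-ordered, compatibly with composition, by comparing values lexicographically; and j'
   factors through j as soon as each gap j(t+1) - j(t) is at most the corresponding gap of j',
   so Dickson's lemma on gap vectors makes |c/OI| Noetherian.  OI is a subcategory of Lambda
   and of its cyclic injections, with the same objects, and the inclusion has property (F): a
   cyclic map f : [d] -> [n] factors as j o e, where j in OI enumerates the image of f together
   with 0, so that its source [k] has k <= d + 1, and e is cyclic (and injective when f is);
   for fixed d there are only finitely many such e. *)

Open Scope Z_scope.

Lemma sig_eq {A : Type} {P : A -> Prop} (u v : {a : A | P a}) :
  proj1_sig u = proj1_sig v -> u = v.
Proof. apply eq_sig_hprop; intros; apply proof_irrelevance. Qed.

(** * Quasi-periodic maps from Z to Z *)

Lemma Zstep_strict_mono (g : Z -> Z) :
  (forall x, g x < g (x + 1)) -> forall x y, x < y -> g x < g y.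
Proof.
  intros Hg x y Hxy.
  replace y with (x + 1 + (y - x - 1)) by lia.
  apply natlike_ind with (x := y - x - 1); [| intros z _ IH | lia].
  - rewrite Z.add_0_r; apply Hg.
  - specialize (Hg (x + 1 + z)). replace (x + 1 + Z.succ z) with (x + 1 + z + 1) by lia. lia.
Qed.

Lemma strict_mono_lt_iff (g : Z -> Z) :
  (forall x y, x < y -> g x < g y) -> forall x y, g x < g y <-> x < y.
Proof.
  intros Hg x y. split; [|auto]. intros H.
  destruct (Z.lt_total x y) as [Hxy|[<-|Hyx]]; [auto | lia | apply Hg in Hyx; lia].
Qed.

Lemma strict_mono_le_iff (g : Z -> Z) :
  (forall x y, x < y -> g x < g y) -> forall x y, g x <= g y <-> x <= y.
Proof. intros Hg x y. pose proof (strict_mono_lt_iff g Hg y x). lia. Qed.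

Lemma strict_mono_inj (g : Z -> Z) :
  (forall x y, x < y -> g x < g y) -> forall x y, g x = g y -> x = y.
Proof. intros Hg x y Hxy. destruct (Z.lt_total x y) as [H|[H|H]]; auto; apply Hg in H; lia. Qed.

Definition quasi_periodic (m : nat) (Q : Z) (g : Z -> Z) : Prop :=
  forall x, g (x + Z.of_nat (S m)) = g x + Q.

Lemma quasi_periodic_mul (m : nat) (Q : Z) (g : Z -> Z) :
  quasi_periodic m Q g -> forall q x, g (x + q * Z.of_nat (S m)) = g x + q * Q.
Proof.
  intros Hg.
  assert (Hnat : forall q x, 0 <= q -> g (x + q * Z.of_nat (S m)) = g x + q * Q).
  { intros q x Hq. apply natlike_ind with (x := q); [| | exact Hq].
    - rewrite !Z.mul_0_l, !Z.add_0_r; reflexivity.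
    - intros z _ IH. replace (x + Z.succ z * Z.of_nat (S m))
        with (x + z * Z.of_nat (S m) + Z.of_nat (S m)) by lia.
      rewrite Hg, IH. lia. }
  intros q x. destruct (Z_le_gt_dec 0 q) as [Hq|Hq]; [auto|].
  specialize (Hnat (- q) (x + q * Z.of_nat (S m)) ltac:(lia)).
  replace (x + q * Z.of_nat (S m) + - q * Z.of_nat (S m)) with x in Hnat by lia. lia.
Qed.

Lemma Z_div_decomp (m : nat) (x : Z) :
  exists r q, 0 <= r <= Z.of_nat m /\ x = r + q * Z.of_nat (S m).
Proof.
  exists (x mod Z.of_nat (S m)), (x / Z.of_nat (S m)).
  pose proof (Z.mod_pos_bound x (Z.of_nat (S m)) ltac:(lia)).
  pose proof (Z.div_mod x (Z.of_nat (S m)) ltac:(lia)). lia.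
Qed.

Lemma quasi_periodic_ext (m : nat) (Q : Z) (g1 g2 : Z -> Z) :
  quasi_periodic m Q g1 -> quasi_periodic m Q g2 ->
  (forall r, 0 <= r <= Z.of_nat m -> g1 r = g2 r) -> g1 = g2.
Proof.
  intros H1 H2 Heq. apply functional_extensionality. intros x.
  destruct (Z_div_decomp m x) as [r [q [Hr ->]]].
  rewrite (quasi_periodic_mul _ _ _ H1), (quasi_periodic_mul _ _ _ H2), Heq; auto.
Qed.

Lemma quasi_periodic_step (m : nat) (Q : Z) (g : Z -> Z) (R : Z -> Z -> Prop) :
  (forall a b c, R a b -> R (a + c) (b + c)) -> quasi_periodic m Q g ->
  (forall r, 0 <= r <= Z.of_nat m -> R (g r) (g (r + 1))) -> forall x, R (g x) (g (x + 1)).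
Proof.
  intros HR Hg Hstep x. destruct (Z_div_decomp m x) as [r [q [Hr ->]]].
  replace (r + q * Z.of_nat (S m) + 1) with (r + 1 + q * Z.of_nat (S m)) by lia.
  rewrite !(quasi_periodic_mul _ _ _ Hg). auto.
Qed.

Lemma quasi_periodic_image (m k : nat) (Q : Z) (g j : Z -> Z) :
  quasi_periodic m Q g -> quasi_periodic k Q j ->
  (forall r, 0 <= r <= Z.of_nat m -> exists t, j t = g r) -> forall x, exists t, j t = g x.
Proof.
  intros Hg Hj Himg x. destruct (Z_div_decomp m x) as [r [q [Hr ->]]].
  destruct (Himg r Hr) as [t Ht]. exists (t + q * Z.of_nat (S k)).
  rewrite (quasi_periodic_mul _ _ _ Hg), (quasi_periodic_mul _ _ _ Hj), Ht. reflexivity.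
Qed.

Definition periodic_ext (m : nat) (Q : Z) (G : Z -> Z) (x : Z) : Z :=
  G (x mod Z.of_nat (S m)) + x / Z.of_nat (S m) * Q.

Lemma periodic_ext_quasi_periodic (m : nat) (Q : Z) (G : Z -> Z) :
  quasi_periodic m Q (periodic_ext m Q G).
Proof.
  intros x. unfold periodic_ext.
  replace (x + Z.of_nat (S m)) with (x + 1 * Z.of_nat (S m)) by lia.
  rewrite Z.mod_add, Z.div_add by lia. lia.
Qed.

Lemma periodic_ext_eq (m : nat) (Q : Z) (G : Z -> Z) (r : Z) :
  0 <= r <= Z.of_nat m -> periodic_ext m Q G r = G r.
Proof. intros Hr. unfold periodic_ext. rewrite Z.mod_small, Z.div_small by lia. lia. Qed.

Lemma periodic_ext_step_lt (m : nat) (Q : Z) (G : Z -> Z) :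
  (forall r, 0 <= r < Z.of_nat m -> G r < G (r + 1)) -> G (Z.of_nat m) < G 0 + Q ->
  forall x, periodic_ext m Q G x < periodic_ext m Q G (x + 1).
Proof.
  intros Hstep Hlast.
  apply (quasi_periodic_step m Q); [intros; lia | apply periodic_ext_quasi_periodic |].
  intros r Hr. destruct (Z.eq_dec r (Z.of_nat m)) as [->|Hne].
  - replace (Z.of_nat m + 1) with (0 + Z.of_nat (S m)) by lia.
    rewrite periodic_ext_quasi_periodic, !periodic_ext_eq by lia. lia.
  - rewrite !periodic_ext_eq by lia. apply Hstep. lia.
Qed.

Lemma discrete_ivt (g : Z -> Z) (r : Z) (N : nat) :
  forall a, g a <= r -> r < g (a + Z.of_nat N) -> exists i, g i <= r < g (i + 1).
Proof.
  induction N as [|N IH]; intros a Ha HN; [rewrite Z.add_0_r in HN; lia|].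
  destruct (Z_lt_le_dec r (g (a + 1))) as [H|H]; [exists a; lia|].
  apply (IH (a + 1)); [exact H|]. now replace (a + 1 + Z.of_nat N) with (a + Z.of_nat (S N)) by lia.
Qed.

(** * Finite types and finite well-orders *)

Definition listable (X : Type) : Prop := exists L : list X, forall x, In x L.

Lemma listable_sig {A : Type} (P : A -> Prop) (L : list A) :
  (forall a, P a -> In a L) -> listable {a | P a}.
Proof.
  intros HL.
  exists (flat_map (fun a => match excluded_middle_informative (P a) with
                             | left p => exist P a p :: nil
                             | right _ => nil end) L).
  intros [a p]. apply in_flat_map. exists a. split; [auto|].
  destruct (excluded_middle_informative (P a)) as [p'|np]; [|contradiction].
  left. apply sig_eq. reflexivity.
Qed.

Lemma listable_sigT_le (H : nat -> Type) :
  (forall k, listable (H k)) ->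
  forall N, exists L : list {k : nat & H k}, forall k x, (k <= N)%nat -> In (existT H k x) L.
Proof.
  intros Hfin N. induction N as [|N [L HL]].
  - destruct (Hfin O) as [L HL]. exists (map (existT H O) L).
    intros k x Hk. assert (k = O) as -> by lia. apply in_map, HL.
  - destruct (Hfin (S N)) as [L' HL']. exists (map (existT H (S N)) L' ++ L).
    intros k x Hk. apply in_or_app. destruct (Nat.eq_dec k (S N)) as [->|Hne].
    + left. apply in_map, HL'.
    + right. apply HL. lia.
Qed.

Lemma bounded_lists_listed (N m : nat) :
  exists L : list (list Z), forall l, length l = m ->
    (forall z, In z l -> 0 <= z <= Z.of_nat N) -> In l L.
Proof.
  induction m as [|m [L HL]].
  - exists (nil :: nil). intros [|z l] Hl _; [now left | discriminate].
  - exists (flat_map (fun z => map (cons z) L) (map Z.of_nat (seq 0 (S N)))).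
    intros [|z l] Hl Hb; [discriminate|]. apply in_flat_map. exists z. split.
    + assert (Hz : 0 <= z <= Z.of_nat N) by (apply Hb; now left).
      apply in_map_iff. exists (Z.to_nat z). split; [lia|]. apply in_seq. lia.
    + apply in_map, HL; [now injection Hl | intros; apply Hb; now right].
Qed.

Definition table (m : nat) (g : Z -> Z) : list Z := map g (map Z.of_nat (seq 0 (S m))).

Lemma table_length (m : nat) (g : Z -> Z) : length (table m g) = S m.
Proof. unfold table. now rewrite !length_map, length_seq. Qed.

Lemma In_table (m : nat) (g : Z -> Z) (z : Z) :
  In z (table m g) <-> exists r, 0 <= r <= Z.of_nat m /\ g r = z.
Proof.
  unfold table. rewrite map_map, in_map_iff. split.
  - intros [i [<- Hi]]. apply in_seq in Hi. exists (Z.of_nat i). split; [lia | reflexivity].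
  - intros [r [Hr <-]]. exists (Z.to_nat r). rewrite in_seq. split; [f_equal |]; lia.
Qed.

Lemma nth_table (m : nat) (g : Z -> Z) (r : Z) :
  0 <= r <= Z.of_nat m -> nth (Z.to_nat r) (table m g) 0 = g r.
Proof.
  intros Hr. unfold table. rewrite map_map.
  rewrite nth_indep with (d' := g (Z.of_nat 0)) by (rewrite length_map, length_seq; lia).
  rewrite (map_nth (fun x => g (Z.of_nat x))), seq_nth by lia. f_equal. lia.
Qed.

Lemma quasi_periodic_table (m : nat) (Q : Z) (g : Z -> Z) :
  quasi_periodic m Q g -> periodic_ext m Q (fun r => nth (Z.to_nat r) (table m g) 0) = g.
Proof.
  intros Hg. apply (quasi_periodic_ext m Q); [apply periodic_ext_quasi_periodic | exact Hg |].
  intros r Hr. rewrite periodic_ext_eq, nth_table; auto.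
Qed.

Lemma table_inj (m : nat) (Q : Z) (g1 g2 : Z -> Z) :
  quasi_periodic m Q g1 -> quasi_periodic m Q g2 -> table m g1 = table m g2 -> g1 = g2.
Proof. intros H1 H2 He. rewrite <- (quasi_periodic_table _ _ _ H1), He. apply quasi_periodic_table, H2. Qed.

Lemma bounded_quasi_periodic_listed (m N : nat) (Q : Z) :
  exists L : list (Z -> Z), forall g, quasi_periodic m Q g ->
    (forall r, 0 <= r <= Z.of_nat m -> 0 <= g r <= Z.of_nat N) -> In g L.
Proof.
  destruct (bounded_lists_listed N (S m)) as [L HL].
  exists (map (fun l => periodic_ext m Q (fun r => nth (Z.to_nat r) l 0)) L).
  intros g Hg Hb. rewrite <- (quasi_periodic_table _ _ _ Hg).
  apply (in_map (fun l => periodic_ext m Q (fun r => nth (Z.to_nat r) l 0))), HL.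
  - apply table_length.
  - intros z Hz. apply In_table in Hz as [r [Hr <-]]. auto.
Qed.

Lemma well_founded_of_listable {X : Type} (R : X -> X -> Prop) : listable X ->
  (forall x, ~ R x x) -> (forall x y z, R x y -> R y z -> R x z) -> well_founded R.
Proof.
  intros [L HL] Hirr Htrans.
  assert (Hacc : forall n (L' : list X), (length L' <= n)%nat ->
                 forall x, (forall y, R y x -> In y L') -> Acc R x).
  { induction n as [|n IH]; intros L' Hlen x Hbelow; constructor; intros y Hyx.
    - destruct L'; [destruct (Hbelow y Hyx) | simpl in Hlen; lia].
    - destruct (in_split _ _ (Hbelow y Hyx)) as [l1 [l2 ->]].
      apply (IH (l1 ++ l2)); [rewrite length_app in *; simpl in Hlen; lia |].
      intros z Hzy. assert (Hzx : R z x) by eauto.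
      specialize (Hbelow z Hzx). apply in_app_or in Hbelow. apply in_or_app.
      destruct Hbelow as [H|[<-|H]]; auto. exfalso; exact (Hirr _ Hzy). }
  intros x. apply (Hacc (length L) L (le_n _)). auto.
Qed.

Inductive lexZ : list Z -> list Z -> Prop :=
| lexZ_head a b l l' : a < b -> lexZ (a :: l) (b :: l')
| lexZ_tail a l l' : lexZ l l' -> lexZ (a :: l) (a :: l').

Lemma lexZ_irrefl (l : list Z) : ~ lexZ l l.
Proof. induction l as [|a l IH]; intros H; inversion H; subst; [lia | auto]. Qed.

Lemma lexZ_trans (l1 l2 l3 : list Z) : lexZ l1 l2 -> lexZ l2 l3 -> lexZ l1 l3.
Proof.
  intros H; revert l3; induction H as [a b l l' Hab | a l l' H IH];
    intros l3 H3; inversion H3; subst; constructor; auto; lia.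
Qed.

Lemma lexZ_total (l l' : list Z) : length l = length l' -> lexZ l l' \/ l = l' \/ lexZ l' l.
Proof.
  revert l'; induction l as [|a l IH]; intros [|b l'] Hl; try discriminate; auto.
  destruct (Z.lt_total a b) as [H|[<-|H]]; [left; now constructor | | right; right; now constructor].
  injection Hl as Hl. destruct (IH l' Hl) as [H|[<-|H]]; auto using lexZ.
Qed.

Lemma lexZ_map (g : Z -> Z) : (forall x y, x < y -> g x < g y) ->
  forall l l', lexZ l l' -> lexZ (map g l) (map g l').
Proof. intros Hg l l' H; induction H; simpl; [apply lexZ_head | apply lexZ_tail]; auto. Qed.

(** * Dickson's lemma *)

Section Dickson.
Local Open Scope nat_scope.

Lemma natstep_strict_mono (g : nat -> nat) :
  (forall n, g n < g (S n)) -> forall a b, a < b -> g a < g b.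
Proof. intros H a b Hab; induction Hab as [|b Hab IH]; [apply H | specialize (H b); lia]. Qed.

Lemma natstep_mono (g : nat -> nat) :
  (forall n, g n <= g (S n)) -> forall a b, a <= b -> g a <= g b.
Proof. intros H a b Hab; induction Hab as [|b Hab IH]; [lia | specialize (H b); lia]. Qed.

Lemma nondecreasing_subsequence (s : nat -> nat) : exists phi : nat -> nat,
  (forall i, phi i < phi (S i)) /\ (forall i, s (phi i) <= s (phi (S i))).
Proof.
  assert (Hmin : forall p, exists i, p < i /\ forall i', p < i' -> s i <= s i').
  { intros p.
    destruct (dec_inh_nat_subset_has_unique_least_element (fun v => exists i, p < i /\ s i = v))
      as [v [[[i [Hi <-]] Hleast] _]]; [intros; apply classic | eauto |].
    exists i. split; [exact Hi|]. intros i' Hi'. apply Hleast. eauto. }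
  destruct (choice _ Hmin) as [next Hnext].
  exists (fun i => Nat.iter (S i) next 0). split; intros i.
  - apply Hnext.
  - apply Hnext. change (Nat.iter i next 0 < next (next (Nat.iter i next 0))).
    pose proof (proj1 (Hnext (Nat.iter i next 0))).
    pose proof (proj1 (Hnext (next (Nat.iter i next 0)))). lia.
Qed.

Lemma dickson (m : nat) (s : nat -> nat -> nat) : exists phi : nat -> nat,
  (forall i, phi i < phi (S i)) /\ forall t, t < m -> forall i, s (phi i) t <= s (phi (S i)) t.
Proof.
  induction m as [|m [phi [Hphi Hs]]]; [exists (fun i => i); split; intros; lia|].
  destruct (nondecreasing_subsequence (fun i => s (phi i) m)) as [psi [Hpsi Hs']].
  exists (fun i => phi (psi i)). split; [intros i; now apply natstep_strict_mono |].
  intros t Ht i. destruct (Nat.eq_dec t m) as [->|Hne]; [apply Hs'|].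
  apply (natstep_mono (fun i => s (phi i) t)); [intros; apply Hs; lia | specialize (Hpsi i); lia].
Qed.

End Dickson.

(** * The category OI *)

(* The lift to Z, as for [cyc_map], of an order-preserving injection {0..k} -> {0..n} fixing 0. *)
Definition oi_map (k n : nat) (j : Z -> Z) : Prop :=
  (forall x, j x < j (x + 1)) /\ quasi_periodic k (Z.of_nat (S n)) j /\ j 0 = 0.

Lemma oi_map_id (k : nat) : oi_map k k (fun x => x).
Proof. repeat split; intros; lia. Qed.

Lemma oi_map_strict_mono (k n : nat) (j : Z -> Z) :
  oi_map k n j -> forall x y, x < y -> j x < j y.
Proof. intros [Hstep _]. now apply Zstep_strict_mono. Qed.

Lemma oi_map_comp (k n p : nat) (g f : Z -> Z) :
  oi_map n p g -> oi_map k n f -> oi_map k p (fun x => g (f x)).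
Proof.
  intros Hg Hf. pose proof Hg as [_ [Hgp Hg0]]. pose proof Hf as [Hf1 [Hfp Hf0]].
  repeat split.
  - intros x. apply (oi_map_strict_mono _ _ _ Hg), Hf1.
  - intros x. now rewrite Hfp, Hgp.
  - now rewrite Hf0.
Qed.

Lemma oi_map_range (k n : nat) (j : Z -> Z) :
  oi_map k n j -> forall y, 0 <= j y <= Z.of_nat n <-> 0 <= y <= Z.of_nat k.
Proof.
  intros Hj y. pose proof Hj as [_ [Hjp Hj0]].
  pose proof (strict_mono_lt_iff _ (oi_map_strict_mono _ _ _ Hj)) as Hlt.
  specialize (Hjp 0). rewrite Z.add_0_l, Hj0 in Hjp.
  pose proof (Hlt y (Z.of_nat (S k))). pose proof (Hlt y 0). lia.
Qed.

Section OIFloor.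
Variables (k n : nat) (j : Z -> Z).
Hypothesis Hj : oi_map k n j.

Lemma oi_floor_exists : exists I : Z -> Z, forall y, j (I y) <= y < j (I y + 1).
Proof.
  apply (choice (fun y i => j i <= y < j (i + 1))). intros y. pose proof Hj as [_ [Hjp Hj0]].
  destruct (Z_div_decomp n y) as [r [q [Hr ->]]].
  destruct (discrete_ivt j r (S k) 0) as [i Hi]; [lia | rewrite Hjp; lia |].
  exists (i + q * Z.of_nat (S k)).
  replace (i + q * Z.of_nat (S k) + 1) with (i + 1 + q * Z.of_nat (S k)) by lia.
  rewrite !(quasi_periodic_mul _ _ _ Hjp). lia.
Qed.

Variable I : Z -> Z.
Hypothesis HI : forall y, j (I y) <= y < j (I y + 1).

Lemma oi_floor_unique (y i : Z) : j i <= y < j (i + 1) -> I y = i.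
Proof.
  intros Hi. pose proof (strict_mono_lt_iff _ (oi_map_strict_mono _ _ _ Hj)) as Hlt.
  specialize (HI y). pose proof (Hlt (I y) (i + 1)). pose proof (Hlt i (I y + 1)). lia.
Qed.

Lemma oi_floor_value (x : Z) : I (j x) = x.
Proof. apply oi_floor_unique. pose proof (proj1 Hj x). lia. Qed.

Lemma oi_floor_image (y : Z) : (exists t, j t = y) -> j (I y) = y.
Proof. intros [t <-]. now rewrite oi_floor_value. Qed.

Lemma oi_floor_mono (y y' : Z) : y <= y' -> I y <= I y'.
Proof.
  intros Hy. pose proof (strict_mono_le_iff _ (oi_map_strict_mono _ _ _ Hj) (I y' + 1) (I y)).
  pose proof (HI y). pose proof (HI y'). lia.
Qed.

Lemma oi_floor_quasi_periodic : quasi_periodic n (Z.of_nat (S k)) I.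
Proof.
  intros y. apply oi_floor_unique. pose proof Hj as [_ [Hjp _]].
  replace (I y + Z.of_nat (S k) + 1) with (I y + 1 + Z.of_nat (S k)) by lia.
  rewrite !Hjp. specialize (HI y). lia.
Qed.

End OIFloor.

Definition OI : PreCat :=
  {| Obj := nat;
     Hom := fun k n => {j : Z -> Z | oi_map k n j};
     idm := fun k => exist _ (fun x => x) (oi_map_id k);
     comp := fun a b c g f => exist _ (fun x => proj1_sig g (proj1_sig f x))
                                 (oi_map_comp a b c _ _ (proj2_sig g) (proj2_sig f)) |}.

Lemma OI_is_category : is_category OI.
Proof. repeat split; intros; now apply sig_eq. Qed.

Lemma OI_hom_listable (c c' : nat) : listable (Hom OI c c').
Proof.
  destruct (bounded_quasi_periodic_listed c c' (Z.of_nat (S c'))) as [L HL].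
  apply (listable_sig _ L). intros j Hj. apply HL; [apply Hj |].
  intros r Hr. now apply (oi_map_range c c' j Hj).
Qed.

Lemma OI_G1 (c : Obj OI) : G1 c.
Proof.
  exists (fun c' (f f' : Hom OI c c') => lexZ (table c (proj1_sig f)) (table c (proj1_sig f'))).
  split.
  - intros c'. split; [|split; [|split]].
    + intros f. apply lexZ_irrefl.
    + intros f f' f''. apply lexZ_trans.
    + intros [f Hf] [f' Hf'].
      destruct (lexZ_total (table c f) (table c f')) as [H|[H|H]]; [now rewrite !table_length | auto | | auto].
      right; left. apply sig_eq, (table_inj c (Z.of_nat (S c'))); [apply Hf | apply Hf' | exact H].
    + apply well_founded_of_listable; [apply OI_hom_listable | intros f; apply lexZ_irrefl |].
      intros f f' f''. apply lexZ_trans.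
  - intros c' c'' [g Hg] [f Hf] [f' Hf'] H. cbn in *. unfold table in *.
    rewrite <- (map_map f g), <- (map_map f' g).
    exact (lexZ_map g (oi_map_strict_mono _ _ _ Hg) _ _ H).
Qed.

Lemma oi_factor_of_gaps (c n n' : nat) (j j' : Z -> Z) : oi_map c n j -> oi_map c n' j' ->
  (forall t, 0 <= t <= Z.of_nat c -> j (t + 1) - j t <= j' (t + 1) - j' t) ->
  exists h, oi_map n n' h /\ forall x, h (j x) = j' x.
Proof.
  intros Hj Hj' Hgap. pose proof Hj as [Hj1 [Hjp Hj0]]. pose proof Hj' as [_ [Hjp' Hj0']].
  assert (Hgaps : forall x, j (x + 1) - j x <= j' (x + 1) - j' x).
  { intros x.
    enough (H : (fun x => j' x - j x) x <= (fun x => j' x - j x) (x + 1)) by (cbn in H; lia).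
    apply (quasi_periodic_step c (Z.of_nat n' - Z.of_nat n) (fun x => j' x - j x) Z.le);
      [intros; lia | | intros r Hr; specialize (Hgap r Hr); cbn; lia].
    intros y. cbn. rewrite Hjp, Hjp'. lia. }
  destruct (oi_floor_exists c n j Hj) as [I HI].
  pose proof (oi_floor_unique c n j Hj I HI) as Iuniq.
  exists (fun y => j' (I y) + (y - j (I y))). split; [split; [|split] |].
  - intros y. specialize (HI y). destruct (Z.eq_dec (y + 1) (j (I y + 1))) as [Heq|Hne].
    + rewrite (Iuniq (y + 1) (I y + 1)) by (specialize (Hj1 (I y + 1)); lia).
      specialize (Hgaps (I y)). lia.
    + rewrite (Iuniq (y + 1) (I y)) by lia. lia.
  - intros y. rewrite (oi_floor_quasi_periodic c n j Hj I HI), Hjp, Hjp'. lia.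
  - pose proof (oi_floor_value c n j Hj I HI 0) as HI0. rewrite Hj0 in HI0.
    cbv beta. rewrite HI0, Hj0, Hj0'. lia.
  - intros x. rewrite (oi_floor_value c n j Hj I HI). lia.
Qed.

Lemma OI_G2 (c : Obj OI) : G2 c.
Proof.
  intros s.
  set (gap := fun i t => let f := proj1_sig (projT2 (s i)) in
                         Z.to_nat (f (Z.of_nat t + 1) - f (Z.of_nat t))).
  destruct (dickson (S c) gap) as [phi [Hphi Hgap]].
  exists (phi O), (phi 1%nat). split; [apply Hphi |].
  unfold gap in Hgap.
  destruct (s (phi O)) as [n [f Hf]] eqn:Hs0, (s (phi 1%nat)) as [n' [f' Hf']] eqn:Hs1.
  destruct (oi_factor_of_gaps c n n' f f' Hf Hf') as [h [Hh Hhf]].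
  - intros t Ht. specialize (Hgap (Z.to_nat t) ltac:(lia) O).
    rewrite Hs0, Hs1, Z2Nat.id in Hgap by lia. cbn in Hgap.
    pose proof (proj1 Hf t). pose proof (proj1 Hf' t). lia.
  - exists (exist _ h Hh). apply sig_eq, functional_extensionality. intros x. cbn. now rewrite Hhf.
Qed.

Lemma OI_Groebner : Groebner OI.
Proof. intros c. split; [apply OI_G1 | apply OI_G2]. Qed.

(** * Factorization of cyclic maps through OI *)

Lemma strict_snoc (k : nat) (J : Z -> Z) (v : Z) :
  (forall t, 0 <= t < Z.of_nat k -> J t < J (t + 1)) -> J (Z.of_nat k) <= v ->
  exists (k' : nat) (J' : Z -> Z), (k <= k' <= S k)%nat /\
    (forall t, 0 <= t < Z.of_nat k' -> J' t < J' (t + 1)) /\ J' (Z.of_nat k') = v /\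
    (forall t, 0 <= t <= Z.of_nat k -> J' t = J t).
Proof.
  intros HJ Hv. destruct (Z.eq_dec (J (Z.of_nat k)) v) as [<-|Hne].
  - exists k, J. repeat split; auto.
  - exists (S k), (fun t => if Z.eqb t (Z.of_nat (S k)) then v else J t).
    split; [lia | split; [| split; [now rewrite Z.eqb_refl |]]]; intros t Ht.
    + destruct (Z.eqb_spec t (Z.of_nat (S k))), (Z.eqb_spec (t + 1) (Z.of_nat (S k))); try lia.
      * replace t with (Z.of_nat k) by lia. lia.
      * apply HJ. lia.
    + destruct (Z.eqb_spec t (Z.of_nat (S k))); [lia | reflexivity].
Qed.

Lemma strict_enumeration (B : Z -> Z) (d : nat) :
  (forall i, 0 <= i < Z.of_nat d -> B i <= B (i + 1)) -> 0 <= B 0 ->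
  exists (k : nat) (J : Z -> Z), (k <= S d)%nat /\ J 0 = 0 /\
    (forall t, 0 <= t < Z.of_nat k -> J t < J (t + 1)) /\ J (Z.of_nat k) = B (Z.of_nat d) /\
    forall i, 0 <= i <= Z.of_nat d -> exists t, 0 <= t <= Z.of_nat k /\ J t = B i.
Proof.
  intros HB HB0. induction d as [|d IH].
  - destruct (strict_snoc 0 (fun _ => 0) (B 0)) as [k [J [Hk [HJ [HJk HJ0]]]]]; [cbn; lia | exact HB0 |].
    exists k, J. split; [lia | split; [apply HJ0; lia | split; [exact HJ | split; [exact HJk |]]]].
    intros i Hi. replace i with 0 by lia. exists (Z.of_nat k). split; [lia | exact HJk].
  - destruct IH as [k [J [Hk [HJ0 [HJ [HJk Hcov]]]]]]; [intros; apply HB; lia |].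
    destruct (strict_snoc k J (B (Z.of_nat (S d)))) as [k' [J' [Hk' [HJ' [HJk' Hagree]]]]];
      [exact HJ | rewrite HJk; replace (Z.of_nat (S d)) with (Z.of_nat d + 1) by lia; apply HB; lia |].
    exists k', J'. split; [lia | split; [rewrite Hagree; [exact HJ0 | lia] | split; [exact HJ' | split; [exact HJk' |]]]].
    intros i Hi. destruct (Z.eq_dec i (Z.of_nat (S d))) as [->|Hne].
    + exists (Z.of_nat k'). split; [lia | exact HJk'].
    + destruct (Hcov i ltac:(lia)) as [t [Ht HJt]]. exists t. split; [lia |]. now rewrite Hagree.
Qed.

Lemma periodic_ext_oi_map (k n : nat) (J : Z -> Z) :
  J 0 = 0 -> (forall t, 0 <= t < Z.of_nat k -> J t < J (t + 1)) -> J (Z.of_nat k) <= Z.of_nat n ->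
  oi_map k n (periodic_ext k (Z.of_nat (S n)) J).
Proof.
  intros HJ0 HJ HJk. split; [|split].
  - apply periodic_ext_step_lt; [exact HJ | lia].
  - apply periodic_ext_quasi_periodic.
  - rewrite periodic_ext_eq; [exact HJ0 | lia].
Qed.

Lemma cyc_map_oi_cover (d n : nat) (f : Z -> Z) : cyc_map d n f ->
  exists (k : nat) (j : Z -> Z), (k <= S d)%nat /\ oi_map k n j /\ forall x, exists t, j t = f x.
Proof.
  intros [fm [fp f0]].
  destruct (discrete_ivt f (Z.of_nat n) (S d) 0) as [i Hi]; [lia | rewrite fp; lia |].
  (* Starting the source just after f passes n turns one period of f into a nondecreasing
     sequence in [0, n]. *)
  set (B := fun x => f (x + (i + 1)) - Z.of_nat (S n)).
  assert (HBp : quasi_periodic d (Z.of_nat (S n)) B).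
  { intros x. unfold B. replace (x + Z.of_nat (S d) + (i + 1)) with (x + (i + 1) + Z.of_nat (S d)) by lia.
    rewrite fp. lia. }
  destruct (strict_enumeration B d) as [k [J [Hk [HJ0 [HJ [HJk Hcov]]]]]].
  { intros x _. unfold B. specialize (fm (x + (i + 1)) (x + 1 + (i + 1)) ltac:(lia)). lia. }
  { unfold B. cbn. lia. }
  assert (HJn : J (Z.of_nat k) <= Z.of_nat n).
  { rewrite HJk. unfold B. replace (Z.of_nat d + (i + 1)) with (i + Z.of_nat (S d)) by lia.
    rewrite fp. lia. }
  pose proof (periodic_ext_oi_map k n J HJ0 HJ HJn) as Hj.
  set (j := periodic_ext k (Z.of_nat (S n)) J) in Hj.
  exists k, j. split; [exact Hk | split; [exact Hj |]].
  assert (HBimg : forall x, exists t, j t = B x).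
  { apply (quasi_periodic_image d k _ B j HBp (proj1 (proj2 Hj))).
    intros r Hr. destruct (Hcov r Hr) as [t [Ht HJt]]. exists t.
    unfold j. rewrite periodic_ext_eq; auto. }
  intros x. destruct (HBimg (x - (i + 1))) as [t Ht]. exists (t + Z.of_nat (S k)).
  rewrite (proj1 (proj2 Hj)), Ht. unfold B. replace (x - (i + 1) + (i + 1)) with x by lia. lia.
Qed.

Lemma oi_cover_factor (d k n : nat) (f j : Z -> Z) : cyc_map d n f -> oi_map k n j ->
  (forall x, exists t, j t = f x) -> exists e, cyc_map d k e /\ forall x, j (e x) = f x.
Proof.
  intros [fm [fp f0]] Hj Hcov.
  destruct (oi_floor_exists k n j Hj) as [I HI].
  pose proof (oi_floor_image k n j Hj I HI) as HjI.
  exists (fun x => I (f x)). split; [split; [|split] |].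
  - intros x y Hxy. apply (oi_floor_mono k n j Hj I HI), fm, Hxy.
  - intros x. now rewrite fp, (oi_floor_quasi_periodic k n j Hj I HI).
  - apply (oi_map_range k n j Hj). now rewrite HjI.
  - intros x. apply HjI, Hcov.
Qed.

Lemma cyc_map_factor (d n : nat) (f : Z -> Z) : cyc_map d n f ->
  exists (k : nat) (j e : Z -> Z),
    (k <= S d)%nat /\ oi_map k n j /\ cyc_map d k e /\ forall x, j (e x) = f x.
Proof.
  intros Hf. destruct (cyc_map_oi_cover d n f Hf) as [k [j [Hk [Hj Hcov]]]].
  destruct (oi_cover_factor d k n f j Hf Hj Hcov) as [e [He Hje]]. now exists k, j, e.
Qed.

Lemma cyc_inj_of_factor (d k n : nat) (j e f : Z -> Z) :
  quasi_periodic k (Z.of_nat (S n)) j -> (forall x, j (e x) = f x) ->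
  (forall x y, (Z.of_nat (S n) | f x - f y) -> (Z.of_nat (S d) | x - y)) ->
  forall x y, (Z.of_nat (S k) | e x - e y) -> (Z.of_nat (S d) | x - y).
Proof.
  intros Hjp Hje Hf x y [c Hc]. apply Hf. rewrite <- !Hje.
  replace (e x) with (e y + c * Z.of_nat (S k)) by lia.
  rewrite (quasi_periodic_mul _ _ _ Hjp). exists c. lia.
Qed.

(** * The inclusions of OI into Lambda and LambdaInj *)

Lemma Lnorm_of_pointwise (n : nat) (g e f : Z -> Z) :
  0 <= f 0 <= Z.of_nat n -> (forall x, g (e x) = f x) -> Lnorm n g e = f.
Proof.
  intros Hf0 Hgef. apply functional_extensionality. intros x. unfold Lnorm.
  rewrite !Hgef, Z.div_small by lia. lia.
Qed.

Lemma oi_map_cyc_map (k n : nat) (j : Z -> Z) : oi_map k n j -> cyc_map k n j.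
Proof.
  intros Hj. pose proof Hj as [_ [Hjp Hj0]]. split; [|split].
  - intros x y. apply (strict_mono_le_iff _ (oi_map_strict_mono _ _ _ Hj)).
  - exact Hjp.
  - lia.
Qed.

Lemma oi_map_cyc_inj (k n : nat) (j : Z -> Z) : oi_map k n j ->
  forall x y, (Z.of_nat (S n) | j x - j y) -> (Z.of_nat (S k) | x - y).
Proof.
  intros Hj x y [c Hc]. exists c.
  enough (x = y + c * Z.of_nat (S k)) by lia.
  apply (strict_mono_inj _ (oi_map_strict_mono _ _ _ Hj)).
  rewrite (quasi_periodic_mul _ _ _ (proj1 (proj2 Hj))). lia.
Qed.

Definition corestrict_functor {C D : PreCat} (F : Functor C D)
  (P : forall a b, Hom D a b -> Prop) (Pid : forall a, P a a (idm a))
  (Pcomp : forall a b c (f : Hom D a b) (g : Hom D b c), P b c g -> P a b f -> P a c (comp g f))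
  (HP : forall a b (g : Hom C a b), P _ _ (Fmor F g)) : Functor C (WideSub D P Pid Pcomp).
Proof.
  refine (@Build_Functor C (WideSub D P Pid Pcomp) (Fobj F)
            (fun a b g => exist _ (Fmor F g) (HP a b g)) _ _).
  - intros a b c f g. apply sig_eq, Fmor_comp.
  - intros a. apply sig_eq, Fmor_id.
Defined.

Lemma isomorphic_refl {D : PreCat} (a : Obj D) : comp (idm a) (idm a) = idm a -> isomorphic a a.
Proof. intros H. now exists (idm a), (idm a). Qed.

Lemma propF_of_factorization {C D : PreCat} (F : Functor C D) (obj : nat -> Obj C)
  (bound : Obj D -> nat) :
  (forall d k, listable (Hom D d (Fobj F (obj k)))) ->
  (forall d c (f : Hom D d (Fobj F c)), exists k (e : Hom D d (Fobj F (obj k))) (g : Hom C (obj k) c),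
      (k <= bound d)%nat /\ f = comp (Fmor F g) e) ->
  propF F.
Proof.
  intros Hfin Hfact d.
  destruct (listable_sigT_le (fun k => Hom D d (Fobj F (obj k))) (Hfin d) (bound d)) as [L HL].
  exists (map (fun p : {k : nat & Hom D d (Fobj F (obj k))} =>
                existT (fun c => Hom D d (Fobj F c)) (obj (projT1 p)) (projT2 p)) L).
  intros c f. destruct (Hfact d c f) as [k [e [g [Hk ->]]]].
  exists (existT _ (obj k) e). split; [| now exists g].
  apply in_map_iff. exists (existT _ k e). auto.
Qed.

Lemma Lambda_idm_comp (n : Obj Lambda) : comp (idm n) (idm n) = idm n.
Proof. apply sig_eq, Lnorm_of_pointwise; cbn; [lia | reflexivity]. Qed.

Lemma LambdaInj_idm_comp (n : Obj LambdaInj) : comp (idm n) (idm n) = idm n.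
Proof. apply sig_eq, Lambda_idm_comp. Qed.

Lemma Lambda_hom_listable (d k : nat) : listable (Hom Lambda d k).
Proof.
  destruct (bounded_quasi_periodic_listed d (2 * k + 1) (Z.of_nat (S k))) as [L HL].
  apply (listable_sig _ L). intros f [fm [fp f0]]. apply HL; [exact fp |].
  intros r Hr. pose proof (fm 0 r ltac:(lia)). pose proof (fm r (0 + Z.of_nat (S d)) ltac:(lia)).
  rewrite fp in *. lia.
Qed.

Lemma LambdaInj_hom_listable (d k : nat) : listable (Hom LambdaInj d k).
Proof. destruct (Lambda_hom_listable d k) as [L HL]. exact (listable_sig _ L (fun f _ => HL f)). Qed.

Definition OI_to_Lambda : Functor OI Lambda.
Proof.
  refine (@Build_Functor OI Lambda (fun k => k)
            (fun a b j => exist _ (proj1_sig j) (oi_map_cyc_map a b _ (proj2_sig j))) _ _).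
  - intros a b c [f Hf] [g Hg]. apply sig_eq. cbn. symmetry. apply Lnorm_of_pointwise; [|reflexivity].
    rewrite (proj2 (proj2 Hf)), (proj2 (proj2 Hg)). lia.
  - intros a. now apply sig_eq.
Defined.

Definition OI_to_LambdaInj : Functor OI LambdaInj :=
  corestrict_functor OI_to_Lambda (@cyc_inj) cyc_inj_id cyc_inj_comp
    (fun a b j => oi_map_cyc_inj a b _ (proj2_sig j)).

Lemma Lambda_factor (d c : nat) (f : Hom Lambda d (Fobj OI_to_Lambda c)) :
  exists k (e : Hom Lambda d (Fobj OI_to_Lambda k)) (g : Hom OI k c),
    (k <= S d)%nat /\ f = comp (Fmor OI_to_Lambda g) e.
Proof.
  destruct f as [f Hf]. destruct (cyc_map_factor d c f Hf) as [k [j [e [Hk [Hj [He Hje]]]]]].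
  exists k, (exist _ e He), (exist _ j Hj). split; [exact Hk |].
  apply sig_eq. cbn. symmetry. apply Lnorm_of_pointwise; [apply Hf | exact Hje].
Qed.

Lemma LambdaInj_factor (d c : nat) (f : Hom LambdaInj d (Fobj OI_to_LambdaInj c)) :
  exists k (e : Hom LambdaInj d (Fobj OI_to_LambdaInj k)) (g : Hom OI k c),
    (k <= S d)%nat /\ f = comp (Fmor OI_to_LambdaInj g) e.
Proof.
  destruct f as [[f Hf] Hinj]. destruct (cyc_map_factor d c f Hf) as [k [j [e [Hk [Hj [He Hje]]]]]].
  assert (Heinj : cyc_inj (m := d) (n := k) (exist _ e He))
    by exact (cyc_inj_of_factor d k c j e f (proj1 (proj2 Hj)) Hje Hinj).
  exists k, (exist _ (exist _ e He) Heinj), (exist _ j Hj). split; [exact Hk |].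
  apply sig_eq, sig_eq. cbn. symmetry. apply Lnorm_of_pointwise; [apply Hf | exact Hje].
Qed.

Theorem proposition5p9 : quasiGroebner Lambda /\ quasiGroebner LambdaInj.
Proof.
  split; exists OI; split; try exact OI_is_category; split; try exact OI_Groebner.
  - exists OI_to_Lambda. split.
    + intros d. exists d. apply isomorphic_refl, Lambda_idm_comp.
    + apply (propF_of_factorization OI_to_Lambda (fun k => k) S);
        [intros; apply Lambda_hom_listable | apply Lambda_factor].
  - exists OI_to_LambdaInj. split.
    + intros d. exists d. apply isomorphic_refl, LambdaInj_idm_comp.
    + apply (propF_of_factorization OI_to_LambdaInj (fun k => k) S);
        [intros; apply LambdaInj_hom_listable | apply LambdaInj_factor].
Qed.
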